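(* For every integer $n\ge 1$, $a_n$ equals one plus the number of integer triples $(x,y,z)$ with $y,z\ge1$ and $x\ge 0$ satisfying $$n=2xyz+yz+x+y.$$ Moreover, $$a_n=1+\sum_{0\le j<n}D_{2j+1}(n-j).$$
   Context: For an integer $n\ge1$, $a_n$ denotes the number of integers $x$ with $0\le x\le n-1$ for which there exists a positive integer $h$ with $h\mid x$ and $(2x+1)\mid(2n-2h+1)$ (every positive integer divides $0$). For positive integers $m,N$, $D_m(N)$ denotes the number of positive divisors $d>1$ of $N$ with $d\equiv 1\pmod m$. *)

From mathcomp Require Import all_boot all_order all_algebra.
From mathcomp Require Import intdiv boolp.
Set Implicit Arguments. Unset Strict Implicit. Unset Printing Implicit Defensive.

Definition a_seq (n : nat) : nat :=
  \sum_(x < n)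
    asbool (exists h : nat, [/\ (0 < h)%N, (h %| x)%N &
       ((2 * x + 1)%:Z %| ((2 * n)%:Z - (2 * h)%:Z + 1)%R)%Z]).

Definition D (m N : nat) : nat :=
  count (fun d => (1 < d)%N && (d == 1 %[mod m])) (divisors N).

(* number of triples (x,y,z) of integers, x >= 0, y,z >= 1, with
   n = 2xyz + yz + x + y.  Every solution has x,y,z <= n, so the search
   over 'I_n.+1 ^3 is exhaustive. *)
Definition triples (n : nat) : nat :=
  #|[set t : 'I_n.+1 * 'I_n.+1 * 'I_n.+1 |
     let: (x, y, z) := t in
     [&& (0 < y)%N, (0 < z)%N &
        n == 2 * x * y * z + y * z + x + y]]|.

(* Since 2(n - y) + 1 = (2x + 1)(2yz + 1) for n = 2xyz + yz + x + y, every
   solution (x, y, z) makes x' = yz an index counted by a_n, with h = y.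
   Conversely, for 0 < x' < n, a divisor h of x' with 2x' + 1 | 2(n - h) + 1
   has an odd cofactor 2x + 1, which gives back a solution with yz = x'.  Two
   such h differ by a multiple of 2x' + 1 that is smaller than x', so h is
   unique; the index x' = 0 is always counted, whence a_n = 1 + #solutions.
   Rewriting the equation as n - x = y((2x + 1)z + 1), the solutions with
   x = j correspond to the divisors d = (2j + 1)z + 1 > 1 of n - j with
   d = 1 (mod 2j + 1). *)

From mathcomp Require Import all_boot all_order all_algebra.
From mathcomp Require Import intdiv boolp zify ring.

Set Implicit Arguments.
Unset Strict Implicit.

Lemma card_inj_in_count (T : finType) (U : eqType) (A : {pred T}) (f : T -> U)
    (P : pred U) (s : seq U) :
  uniq s -> {in A &, injective f} ->
  {in A, forall t, (f t \in s) && P (f t)} ->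
  (forall u, u \in s -> P u -> exists2 t, t \in A & f t = u) ->
  #|A| = count P s.
Proof.
move=> s_uniq f_inj f_in f_onto.
rewrite cardE -(size_map f) -size_filter; apply/perm_size/uniq_perm.
- by rewrite map_inj_in_uniq ?enum_uniq // => t1 t2; rewrite !mem_enum; apply: f_inj.
- exact: filter_uniq.
move=> u; rewrite mem_filter andbC; apply/mapP/idP => [[t] | /andP[u_s Pu]].
  by rewrite mem_enum => /f_in ? ->.
by have [t At <-] := f_onto u u_s Pu; exists t; rewrite ?mem_enum.
Qed.

Lemma sum_bool_count (I : Type) (r : seq I) (a : pred I) :
  \sum_(i <- r) a i = count a r.
Proof. by rewrite -sumn_count sumnE big_map. Qed.

Lemma card_fibers (T : finType) (A : {pred T}) (p : T -> nat) (m : nat) :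
  {in A, forall t, p t < m} ->
  #|A| = \sum_(0 <= j < m) #|[pred t in A | p t == j]|.
Proof.
move=> p_lt; rewrite -sum1_card (eq_bigr (fun t => \sum_(0 <= j < m) (p t == j))).
  by rewrite exchange_big; apply: eq_bigr => j _; rewrite -sum1_card big_mkcondr.
move=> t /p_lt pt_lt; rewrite sum_bool_count.
rewrite (@eq_count _ _ (pred1 (p t))) => [|j /=]; last exact: eq_sym.
by rewrite count_uniq_mem ?iota_uniq // mem_index_iota pt_lt.
Qed.

Section Solutions.
Variable n : nat.

Local Notation triple := ('I_n.+1 * 'I_n.+1 * 'I_n.+1)%type.

Definition is_solution (x y z : nat) : bool :=
  [&& 0 < y, 0 < z & n == 2 * x * y * z + y * z + x + y].

Lemma is_solutionE x y z :
  is_solution x y z = [&& 0 < y, 0 < z & n == y * ((2 * x + 1) * z + 1) + x].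
Proof. by rewrite /is_solution; congr [&& _, _ & n == _]; ring. Qed.

Lemma solution_le x y z : is_solution x y z -> [/\ x <= n, y <= n & z <= n].
Proof. by case/and3P=> y_gt0 z_gt0 /eqP ->; split; nia. Qed.

Lemma solution_odd_factor x y z :
  is_solution x y z -> 2 * (n - y) + 1 = (2 * x + 1) * (2 * (y * z) + 1).
Proof. by case/and3P=> _ _ /eqP ->; rewrite addnK; ring. Qed.

(* The truncated [n - h] is harmless: [0 < h], [h %| x] and [0 < x < n] give [h < n]. *)
Definition a_witness (x h : nat) : bool :=
  [&& 0 < h, h %| x & 2 * x + 1 %| 2 * (n - h) + 1].

Lemma solution_a_witness x y z :
  is_solution x y z -> 0 < y * z < n /\ a_witness (y * z) y.
Proof.
move=> sol; have /and3P[y_gt0 z_gt0 /eqP n_eq] := sol.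
split; first by rewrite n_eq; nia.
by rewrite /a_witness y_gt0 dvdn_mulr // (solution_odd_factor sol) dvdn_mull.
Qed.

Lemma a_witness_unique x h1 h2 :
  0 < x < n -> a_witness x h1 -> a_witness x h2 -> h1 = h2.
Proof.
wlog le_h12 : h1 h2 / h1 <= h2 => [hyp x_bd w1 w2|].
  by case: (leqP h1 h2) => [le|/ltnW le]; [apply: hyp | symmetry; apply: hyp].
case/andP=> x_gt0 x_lt_n /and3P[_ _ d1] /and3P[_ h2_x d2].
have h2_le : h2 <= x := dvdn_leq x_gt0 h2_x.
have : 2 * x + 1 %| h2 - h1.
  have := dvdn_sub d1 d2; rewrite (_ : _ - _ = 2 * (h2 - h1)); last by lia.
  by rewrite Gauss_dvdr // coprimen2 oddD oddM.
case: (posnP (h2 - h1)) => [|d_gt0]; first by lia.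
by rewrite gtnNdvd //; lia.
Qed.

Lemma a_witness_solution x h :
  0 < x < n -> a_witness x h -> exists X Z, is_solution X h Z /\ h * Z = x.
Proof.
case/andP=> x_gt0 x_lt_n /and3P[h_gt0 /dvdnP[Z x_eq] /dvdnP[q q_eq]].
have Z_gt0 : 0 < Z by nia.
have h_le : h <= n by nia.
have q_odd : odd q.
  by move: (congr1 odd q_eq); rewrite !(oddD, oddM) /= andbT.
exists q./2, Z; split; last by rewrite x_eq mulnC.
rewrite /is_solution h_gt0 Z_gt0 /=; apply/eqP.
have q_half : q = 2 * q./2 + 1 by rewrite -[LHS]odd_double_half q_odd; lia.
rewrite q_half x_eq in q_eq; nia.
Qed.

Definition a_pred (x : nat) : Prop := exists h : nat,
  [/\ 0 < h, h %| x & ((2 * x + 1)%:Z %| ((2 * n)%:Z - (2 * h)%:Z + 1)%R)%Z].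

Lemma a_predP x : 0 < x < n -> a_pred x <-> exists h, a_witness x h.
Proof.
case/andP=> x_gt0 x_lt_n.
have dvdzE h : h %| x -> ((2 * x + 1)%:Z %| ((2 * n)%:Z - (2 * h)%:Z + 1)%R)%Z =
                         (2 * x + 1 %| 2 * (n - h) + 1).
  move=> /(dvdn_leq x_gt0) h_le.
  by rewrite (_ : (_ - _ + 1)%R = Posz (2 * (n - h) + 1)) //; lia.
split=> [[h [h_gt0 h_x]] | [h /and3P[h_gt0 h_x]]]; exists h.
  by rewrite /a_witness h_gt0 h_x -dvdzE.
by rewrite dvdzE.
Qed.

Definition triple_set := [set t : triple | let: (x, y, z) := t in is_solution x y z].

Lemma in_triple_set (x y z : 'I_n.+1) :
  ((x, y, z) \in triple_set) = is_solution x y z.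
Proof. by rewrite inE. Qed.

Lemma triple_set_inord x y z : is_solution x y z ->
  exists2 t, t \in triple_set & (t.1.1 : nat, t.1.2 : nat, t.2 : nat) = (x, y, z).
Proof.
move=> sol; have [x_le y_le z_le] := solution_le sol.
by exists (inord x, inord y, inord z); rewrite ?in_triple_set !inordK.
Qed.

Lemma card_triple_set_a :
  #|triple_set| = count (fun x => (0 < x) && `[< a_pred x >]) (iota 0 n).
Proof.
apply: (@card_inj_in_count _ _ _ (fun t : triple => t.1.2 * t.2)); first exact: iota_uniq.
- move=> [[x y] z] [[x' y'] z']; rewrite !in_triple_set /= => sol sol' yz_eq.
  have [_ w] := solution_a_witness sol.
  have [x_bd w'] := solution_a_witness sol'; rewrite -yz_eq in x_bd w'.
  have y_eq := a_witness_unique x_bd w w'.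
  have /and3P[y_gt0 _ _] := sol.
  have z_eq : z = z' :> nat by apply/eqP; rewrite -(eqn_pmul2l y_gt0) yz_eq y_eq.
  have x_eq : x = x' :> nat.
    have : (2 * x + 1) * (2 * (y * z) + 1) = (2 * x' + 1) * (2 * (y * z) + 1).
      by rewrite -(solution_odd_factor sol) yz_eq -(solution_odd_factor sol') y_eq.
    by move/eqP; rewrite eqn_pmul2r ?addn1 //; lia.
  by congr (_, _, _); apply: val_inj.
- move=> [[x y] z]; rewrite in_triple_set mem_iota /=.
  case/solution_a_witness=> /andP[yz_gt0 yz_lt_n] w; rewrite yz_gt0 yz_lt_n /=.
  by apply/asboolP/a_predP; [rewrite yz_gt0 | exists y].
move=> x; rewrite mem_iota => /andP[_ x_lt_n] /andP[x_gt0 /asboolP].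
case/a_predP=> [|h /a_witness_solution]; first by rewrite x_gt0.
case=> [|X [Z [sol <-]]]; first by rewrite x_gt0.
have [[[x' y'] z'] t_in [_ <- <-]] := triple_set_inord sol.
by exists (x', y', z').
Qed.

Lemma card_triple_fiber j : j < n ->
  #|[pred t in triple_set | t.1.1 == j :> nat]| = D (2 * j + 1) (n - j).
Proof.
move=> j_lt_n; have nj_gt0 : 0 < n - j by rewrite subn_gt0.
apply: (@card_inj_in_count _ _ _ (fun t : triple => (2 * t.1.1 + 1) * t.2 + 1)).
- exact: divisors_uniq.
- move=> [[x y] z] [[x' y'] z']; rewrite !inE /= !is_solutionE.
  case/andP=> /and3P[y_gt0 z_gt0 /eqP n_eq] /eqP x_eq.
  case/andP=> /and3P[_ _ /eqP n_eq'] /eqP x_eq' d_eq.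
  rewrite x_eq x_eq' in d_eq n_eq n_eq'.
  have z_eq : z = z' :> nat.
    by move/addIn/eqP: d_eq; rewrite eqn_pmul2l ?addn1 // => /eqP.
  have y_eq : y = y' :> nat.
    have := etrans (esym n_eq) n_eq'; rewrite -z_eq => /addIn/eqP.
    by rewrite eqn_pmul2r ?addn1 // => /eqP.
  by congr (_, _, _); apply: val_inj; [exact: etrans x_eq (esym x_eq') | | ].
- move=> [[x y] z]; rewrite !inE /= is_solutionE.
  case/andP=> /and3P[y_gt0 z_gt0 /eqP n_eq] /eqP x_eq.
  have nj_eq : n - j = y * ((2 * j + 1) * z + 1) by rewrite -x_eq; lia.
  rewrite x_eq -dvdn_divisors // nj_eq dvdn_mull //= (mulnC _ z) modnMDl eqxx andbT.
  by rewrite addn1 ltnS muln_gt0 addn1 z_gt0.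
move=> d; rewrite -dvdn_divisors // => /dvdnP[y nj_eq] /andP[d_gt1].
rewrite eqn_mod_dvd ?(ltnW d_gt1) // => /dvdnP[z d1_eq].
have d_eq : d = (2 * j + 1) * z + 1 by lia.
have sol : is_solution j y z.
  by rewrite is_solutionE -d_eq; apply/and3P; split; [nia | nia | apply/eqP; lia].
have [[[x' y'] z'] t_in [x'_eq _ z'_eq]] := triple_set_inord sol.
exists (x', y', z'); first by rewrite inE /= t_in x'_eq eqxx.
by rewrite /= x'_eq z'_eq d_eq.
Qed.

Lemma card_triple_set_D :
  #|triple_set| = \sum_(0 <= j < n) D (2 * j + 1) (n - j).
Proof.
rewrite (@card_fibers _ _ (fun t : triple => nat_of_ord t.1.1) n).
  by apply: eq_big_nat => j /andP[_ j_lt_n]; apply: card_triple_fiber.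
move=> [[x y] z]; rewrite in_triple_set is_solutionE.
by case/and3P=> y_gt0 z_gt0 /eqP n_eq /=; nia.
Qed.

End Solutions.

Lemma a_seq_count n : 0 < n ->
  a_seq n = 1 + count (fun x => (0 < x) && `[< a_pred n x >]) (iota 0 n).
Proof.
case: n => // n _; rewrite /a_seq.
rewrite -(big_mkord xpredT (fun x => nat_of_bool `[< a_pred n.+1 x >])).
rewrite sum_bool_count /=.
have -> : `[< a_pred n.+1 0 >] by apply/asboolP; exists 1; rewrite dvd1z.
congr (1 + _); apply: eq_in_count => x; rewrite mem_iota => /andP[x_gt0 _].
by rewrite x_gt0.
Qed.

Unset Implicit Arguments.

Theorem theorem11 (n : nat) : (1 <= n)%N ->
  a_seq n = (1 + triples n)%N /\
  a_seq n = (1 + \sum_(0 <= j < n) D (2 * j + 1) (n - j))%N.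
Proof.
move=> n_gt0; have -> : triples n = #|triple_set n| by [].
by rewrite (a_seq_count n_gt0) -card_triple_set_a -card_triple_set_D.
Qed.
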